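(* Let $p>2$ be a finite integer. For each $n\ge2$ let non-negative numbers ${p_j^n}'$, ${p_j^n}''$ ($j=1,\dots,n$) and $p^n_{OPT}$ be given with $p^n_{OPT}+\sum_{j=1}^n{p_j^n}'+\sum_{j=1}^n{p_j^n}''=1$. Let $f$ be the randomized mechanism which, on a reported profile ${\bf x}=(x_1,\dots,x_n)$, locates the facility at $OPT({\bf x})$ with probability $p^n_{OPT}$, at $x_j$ with probability ${p_j^n}'$, and at $x_{[j]}$ with probability ${p_j^n}''$ (probabilities of coinciding locations add up), where $x_{[j]}$ is the $j$-th largest component of ${\bf x}$ and $OPT({\bf x})$ is the unique minimizer over $y\in\mathbb{R}$ of $\sum_i|x_i-y|^p$. If $f$ is strategyproof, then the approximation ratio of $f$ is at least $2^{1-\frac1p}$.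
   Context: A randomized mechanism maps each profile ${\bf x}\in\mathbb{R}^n$ (for each $n\ge2$) to a probability distribution $\pi$ on $\mathbb{R}$; the facility location $y$ is drawn from $\pi$. Agent $i$ located at $x_i$ has cost $C(x_i,\pi)=\mathbb{E}_{y\sim\pi}|x_i-y|$. The mechanism is strategyproof if for every $n$, every agent $i$, all $x_i,x_i'\in\mathbb{R}$ and all ${\bf x}_{-i}$: $C(x_i,f(x_i,{\bf x}_{-i}))\le C(x_i,f(x_i',{\bf x}_{-i}))$. The social cost is $sc({\bf x},\pi)=\mathbb{E}_{y\sim\pi}\big(\sum_i|x_i-y|^p\big)^{1/p}$, and the approximation ratio of $f$ is $\sup sc({\bf x},f({\bf x}))/\min_{y}sc({\bf x},y)$, the supremum taken over all $n\ge 2$ and all profiles ${\bf x}\in\mathbb{R}^n$ (with $0/0=1$, $c/0=\infty$ for $c>0$). *)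

From Stdlib Require Import Reals Lra Lia List Classical ClassicalEpsilon.
Import ListNotations.
Open Scope R_scope.

Fixpoint sumR (n : nat) (f : nat -> R) : R :=
  match n with
  | O => 0
  | S m => sumR m f + f m
  end.

(* p-th root on nonnegative reals, with rootp p 0 = 0 (Rpower 0 _ is not 0 in Stdlib). *)
Definition rootp (p : nat) (t : R) : R :=
  if Rle_dec t 0 then 0 else Rpower t (/ INR p).

Definition sumpow (p n : nat) (x : nat -> R) (y : R) : R :=
  sumR n (fun i => (Rabs (x i - y)) ^ p).

(* OPT(x): the minimizer over y of sum_i |x_i - y|^p (chosen by epsilon;
   it exists and is unique for p > 2, n >= 2). *)
Definition OPT (p n : nat) (x : nat -> R) : R :=
  epsilon (inhabits 0) (fun y => forall z, sumpow p n x y <= sumpow p n x z).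

Fixpoint insert_desc (a : R) (l : list R) : list R :=
  match l with
  | nil => [a]
  | b :: t => if Rle_dec b a then a :: b :: t else b :: insert_desc a t
  end.
Definition sort_desc (l : list R) : list R := fold_right insert_desc nil l.

(* x_[j+1]: the (j+1)-th largest component of (x_0, ..., x_{n-1}) (j is 0-based) *)
Definition kth_largest (n : nat) (x : nat -> R) (j : nat) : R :=
  nth j (sort_desc (map x (seq 0 n))) 0.

(* The mechanism: for each n, weights popt n, p1 n j (at x_j), p2 n j (at x_[j+1]). *)
Definition exp_cost (p : nat) (popt : nat -> R) (p1 p2 : nat -> nat -> R)
  (n : nat) (x : nat -> R) (g : R -> R) : R :=
  popt n * g (OPT p n x)
  + sumR n (fun j => p1 n j * g (x j))
  + sumR n (fun j => p2 n j * g (kth_largest n x j)).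

Definition agent_cost p popt p1 p2 n x (a : R) : R :=
  exp_cost p popt p1 p2 n x (fun y => Rabs (a - y)).

Definition update (x : nat -> R) (i : nat) (v : R) : nat -> R :=
  fun k => if Nat.eq_dec k i then v else x k.

Definition strategyproof p popt p1 p2 : Prop :=
  forall (n : nat), (2 <= n)%nat -> forall (i : nat), (i < n)%nat ->
  forall (x : nat -> R) (v : R),
    agent_cost p popt p1 p2 n x (x i) <= agent_cost p popt p1 p2 n (update x i v) (x i).

Definition sc_det (p n : nat) (x : nat -> R) (y : R) : R := rootp p (sumpow p n x y).

Definition sc_mech p popt p1 p2 n x : R := exp_cost p popt p1 p2 n x (sc_det p n x).

(* min_y sc(x, y) (chosen by epsilon; it is attained) *)
Definition sc_opt (p n : nat) (x : nat -> R) : R :=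
  epsilon (inhabits 0)
    (fun c => (exists y, c = sc_det p n x y) /\ forall y, c <= sc_det p n x y).

(* "the ratio a/b exceeds r", with conventions 0/0 = 1, c/0 = +oo for c > 0 *)
Definition ratio_gt (a b r : R) : Prop :=
  (0 < b /\ r < a / b) \/ (b = 0 /\ 0 < a) \/ (b = 0 /\ a = 0 /\ r < 1).

(* approximation ratio (sup over n >= 2 and profiles) is >= r *)
Definition approx_ratio_ge p popt p1 p2 (r : R) : Prop :=
  forall r', r' < r -> exists (n : nat) (x : nat -> R), (2 <= n)%nat /\
    ratio_gt (sc_mech p popt p1 p2 n x) (sc_opt p n x) r'.

(* Write c = 2^(1-1/p) and q = p - 2 >= 1.  Two profiles are used.
   - Split profile (k agents at 1, k at 0): OPT = 1/2 and every reported
     location costs exactly c times the optimum, so the ratio equals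
     popt + (1 - popt) c.  It exceeds r < c unless popt is at least a
     threshold depending only on r.
   - Tail profile (one agent at 2, n - 2 at 1, the last at 0): OPT = 1 costs
     2^(1/p), while the last agent's location costs at least n^(1/p).  If the
     last agent reported -1/n instead, OPT would drop by at least 1/(4n);
     strategyproofness therefore puts weight >= popt/4 on its location, and
     the ratio grows like popt n^(1/p).
   OPT is located through the first-order condition: u |-> |u|^p lies above
   its tangents, whose slope p * psi is strictly increasing, so OPT is the
   unique zero of the derivative dsumpow. *)

From Stdlib Require Import Reals Lra Lia List ClassicalEpsilon FunctionalExtensionality.
Open Scope R_scope.

Lemma sumR_ext n f g : (forall i, (i < n)%nat -> f i = g i) -> sumR n f = sumR n g.
Proof.
  induction n as [|n IH]; intros H; simpl; [reflexivity|].
  rewrite IH by (intros; apply H; lia). rewrite H by lia. reflexivity.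
Qed.

Lemma sumR_plus n f g : sumR n (fun i => f i + g i) = sumR n f + sumR n g.
Proof. induction n as [|n IH]; simpl; [ring|rewrite IH; ring]. Qed.

Lemma sumR_scal n f c : sumR n (fun i => f i * c) = sumR n f * c.
Proof. induction n as [|n IH]; simpl; [ring|rewrite IH; ring]. Qed.

Lemma sumR_const n c : sumR n (fun _ => c) = INR n * c.
Proof. induction n as [|n IH]; simpl sumR; [simpl; ring|rewrite IH, S_INR; ring]. Qed.

Lemma sumR_nonneg n f : (forall i, (i < n)%nat -> 0 <= f i) -> 0 <= sumR n f.
Proof.
  induction n as [|n IH]; simpl; intros H; [lra|].
  pose proof (IH (fun i Hi => H i ltac:(lia))). pose proof (H n ltac:(lia)). lra.
Qed.

Lemma sumR_shift n f : sumR (S n) f = f 0%nat + sumR n (fun j => f (S j)).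
Proof.
  induction n as [|n IH]; [simpl; ring|].
  change (sumR (S (S n)) f) with (sumR (S n) f + f (S n)). rewrite IH. simpl. ring.
Qed.

Lemma sumR_add m n f : sumR (m + n) f = sumR m f + sumR n (fun j => f (m + j)%nat).
Proof.
  induction n as [|n IH]; simpl; [rewrite Nat.add_0_r; ring|].
  rewrite Nat.add_succ_r; simpl; rewrite IH; ring.
Qed.

Lemma sumR_last n f : (1 <= n)%nat -> sumR n f = sumR (n - 1) f + f (n - 1)%nat.
Proof. intros H. destruct n; [lia|]. replace (S n - 1)%nat with n by lia. reflexivity. Qed.

Definition desc (n : nat) (x : nat -> R) : Prop :=
  forall i j, (i <= j)%nat -> (j < n)%nat -> x j <= x i.

Lemma sort_desc_id (x : nat -> R) (s len : nat) :
  (forall i j, (s <= i)%nat -> (i <= j)%nat -> (j < s + len)%nat -> x j <= x i) ->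
  sort_desc (map x (seq s len)) = map x (seq s len).
Proof.
  revert s. induction len as [|len IH]; intros s H; [reflexivity|].
  cbn [seq map]. unfold sort_desc; cbn [fold_right]. fold (sort_desc (map x (seq (S s) len))).
  rewrite IH by (intros; apply H; lia).
  destruct len as [|len]; cbn; [reflexivity|].
  destruct (Rle_dec (x (S s)) (x s)) as [_|Hn]; [reflexivity|].
  exfalso; apply Hn, H; lia.
Qed.

Lemma kth_largest_desc n x j : desc n x -> (j < n)%nat -> kth_largest n x j = x j.
Proof.
  intros H Hj. unfold kth_largest. rewrite sort_desc_id by (intros; apply H; lia).
  rewrite nth_indep with (d' := x 0%nat) by (rewrite length_map, length_seq; lia).
  rewrite map_nth, seq_nth by lia. reflexivity.
Qed.

(* Total probability the mechanism puts on the location of agent j when the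
   profile is descending: both x_j and x_[j] designate it. *)
Definition weight (p1 p2 : nat -> nat -> R) (n j : nat) : R := p1 n j + p2 n j.

Definition lottery (popt : nat -> R) (p1 p2 : nat -> nat -> R) (n : nat) : Prop :=
  0 <= popt n /\ (forall j, (j < n)%nat -> 0 <= p1 n j /\ 0 <= p2 n j) /\
  popt n + sumR n (p1 n) + sumR n (p2 n) = 1.

Lemma weight_nonneg popt p1 p2 n j :
  lottery popt p1 p2 n -> (j < n)%nat -> 0 <= weight p1 p2 n j.
Proof. intros [_ [H _]] Hj. destruct (H j Hj). unfold weight. lra. Qed.

Lemma weight_total popt p1 p2 n :
  lottery popt p1 p2 n -> sumR n (weight p1 p2 n) = 1 - popt n.
Proof. intros [_ [_ H]]. unfold weight. rewrite sumR_plus. lra. Qed.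

Lemma exp_cost_desc p popt p1 p2 n x g : desc n x ->
  exp_cost p popt p1 p2 n x g =
  popt n * g (OPT p n x) + sumR n (fun j => weight p1 p2 n j * g (x j)).
Proof.
  intros H. unfold exp_cost, weight.
  rewrite (sumR_ext n (fun j => p2 n j * g (kth_largest n x j)) (fun j => p2 n j * g (x j)))
    by (intros; rewrite kth_largest_desc; auto).
  rewrite Rplus_assoc, <- sumR_plus.
  f_equal. apply sumR_ext. intros; ring.
Qed.

Lemma pow_tangent m a b : 0 <= a -> 0 <= b -> a ^ S m + INR (S m) * a ^ m * (b - a) <= b ^ S m.
Proof.
  intros Ha Hb. induction m as [|m IH]; [simpl; lra|].
  assert (Hp : 0 <= a ^ m) by (apply pow_le; auto).
  assert (Hs : 0 <= INR (S m)) by apply pos_INR.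
  change (a ^ S (S m)) with (a * (a * a ^ m)).
  change (a ^ S m) with (a * a ^ m) in IH |- *.
  change (b ^ S (S m)) with (b * b ^ S m).
  rewrite S_INR.
  assert (H1 : b * (a * a ^ m + INR (S m) * a ^ m * (b - a)) <= b * b ^ S m)
    by (apply Rmult_le_compat_l; auto).
  assert (H2 : 0 <= INR (S m) * a ^ m * ((b - a) * (b - a))).
  { apply Rmult_le_pos; [apply Rmult_le_pos; assumption | apply Rle_0_sqr]. }
  nra.
Qed.

Lemma pow_strict m a b : 0 < a -> a < b -> a ^ S m < b ^ S m.
Proof.
  intros Ha Hab. pose proof (pow_tangent m a b ltac:(lra) ltac:(lra)).
  assert (0 < INR (S m) * a ^ m * (b - a)).
  { apply Rmult_lt_0_compat; [apply Rmult_lt_0_compat; [apply lt_0_INR; lia | apply pow_lt; auto] | lra]. }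
  lra.
Qed.

(* psi q is (1/p) times the derivative of u |-> |u|^p, for p = q + 2. *)
Definition psi (q : nat) (u : R) : R := u * Rabs u ^ q.

Lemma psi_pos q u : 0 <= u -> psi q u = u ^ S q.
Proof. intros H. unfold psi. rewrite Rabs_right by lra. reflexivity. Qed.

Lemma psi_opp q u : psi q (- u) = - psi q u.
Proof. unfold psi. rewrite Rabs_Ropp. ring. Qed.

Lemma psi_neg q u : u <= 0 -> psi q u = - (- u) ^ S q.
Proof. intros H. rewrite <- (Ropp_involutive u) at 1. rewrite psi_opp, psi_pos by lra. reflexivity. Qed.

Lemma psi_lt q u v : u < v -> psi q u < psi q v.
Proof.
  intros Huv. destruct (Rlt_dec 0 u) as [Hu|Hu]; [|destruct (Rlt_dec v 0) as [Hv|Hv]].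
  - rewrite !psi_pos by lra. apply pow_strict; lra.
  - rewrite !psi_neg by lra. pose proof (pow_strict q (- v) (- u) ltac:(lra) ltac:(lra)). lra.
  - rewrite psi_neg, psi_pos by lra.
    destruct (Rlt_dec u 0).
    + pose proof (pow_lt (- u) (S q) ltac:(lra)). pose proof (pow_le v (S q) ltac:(lra)). lra.
    + pose proof (pow_le (- u) (S q) ltac:(lra)). pose proof (pow_lt v (S q) ltac:(lra)). lra.
Qed.

Lemma psi_continuous q : continuity (psi q).
Proof.
  assert (H : continuity (fun u => Rabs u ^ q)).
  { induction q as [|q IH].
    - apply continuity_const. intros a b; reflexivity.
    - exact (continuity_mult _ _ Rcontinuity_abs IH). }
  exact (continuity_mult _ _ (derivable_continuous _ derivable_id) H).
Qed.

(* (1/p) times the derivative in y of sumpow p n x y, for p = q + 2. *)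
Definition dsumpow (q n : nat) (x : nat -> R) (w : R) : R := sumR n (fun i => psi q (w - x i)).

Definition isMin (p n : nat) (x : nat -> R) (y : R) : Prop := forall z, sumpow p n x y <= sumpow p n x z.

Section FirstOrderCondition.
Variable q : nat.
Local Notation p := (S (S q)).

Lemma abs_pow_tangent u v : Rabs u ^ p + INR p * psi q u * (v - u) <= Rabs v ^ p.
Proof.
  pose proof (Rle_abs v). pose proof (Rle_abs (- v)). rewrite Rabs_Ropp in *.
  assert (Hc : 0 <= INR p) by apply pos_INR.
  destruct (Rle_dec 0 u) as [Hu|Hu].
  - rewrite psi_pos, (Rabs_right u) by lra.
    pose proof (pow_tangent (S q) u (Rabs v) Hu (Rabs_pos v)).
    assert (0 <= INR p * u ^ S q) by (apply Rmult_le_pos; auto; apply pow_le; auto).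
    assert (INR p * u ^ S q * (v - u) <= INR p * u ^ S q * (Rabs v - u))
      by (apply Rmult_le_compat_l; lra).
    lra.
  - rewrite psi_neg, (Rabs_left u) by lra.
    pose proof (pow_tangent (S q) (- u) (Rabs v) ltac:(lra) (Rabs_pos v)).
    assert (0 <= INR p * (- u) ^ S q) by (apply Rmult_le_pos; auto; apply pow_le; lra).
    assert (INR p * (- u) ^ S q * (- v + u) <= INR p * (- u) ^ S q * (Rabs v - - u))
      by (apply Rmult_le_compat_l; lra).
    replace (INR p * - (- u) ^ S q * (v - u)) with (INR p * (- u) ^ S q * (- v + u)) by ring.
    lra.
Qed.

Lemma sumpow_tangent n x w z :
  sumpow p n x w + INR p * (z - w) * dsumpow q n x w <= sumpow p n x z.
Proof.
  unfold sumpow, dsumpow. induction n as [|n IH]; cbn [sumR]; [lra|].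
  pose proof (abs_pow_tangent (w - x n) (z - x n)) as Ht.
  rewrite (Rabs_minus_sym (x n) w), (Rabs_minus_sym (x n) z).
  replace (z - x n - (w - x n)) with (z - w) in Ht by ring.
  lra.
Qed.

Lemma zero_isMin n x w : dsumpow q n x w = 0 -> isMin p n x w.
Proof. intros H z. pose proof (sumpow_tangent n x w z). rewrite H in H0. lra. Qed.

Lemma isMin_sign n x y w : isMin p n x y -> (y - w) * dsumpow q n x w <= 0.
Proof.
  intros Hm. pose proof (sumpow_tangent n x w y). pose proof (Hm w).
  assert (0 < INR p) by (apply lt_0_INR; lia).
  destruct (Rle_dec ((y - w) * dsumpow q n x w) 0) as [|Hn]; [assumption|].
  assert (0 < INR p * ((y - w) * dsumpow q n x w)) by (apply Rmult_lt_0_compat; lra).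
  nra.
Qed.

Lemma dsumpow_le n x u v : u <= v -> dsumpow q n x u <= dsumpow q n x v.
Proof.
  intros Huv. unfold dsumpow. induction n as [|n IH]; cbn [sumR]; [lra|].
  destruct (Req_dec u v) as [->|Hne]; [lra|].
  pose proof (psi_lt q (u - x n) (v - x n) ltac:(lra)). lra.
Qed.

Lemma dsumpow_lt n x u v : (0 < n)%nat -> u < v -> dsumpow q n x u < dsumpow q n x v.
Proof.
  intros Hn Huv. destruct n as [|n]; [lia|]. unfold dsumpow. cbn [sumR].
  pose proof (dsumpow_le n x u v ltac:(lra)). pose proof (psi_lt q (u - x n) (v - x n) ltac:(lra)).
  unfold dsumpow in *. lra.
Qed.

Lemma dsumpow_continuous n x : continuity (dsumpow q n x).
Proof.
  unfold dsumpow. induction n as [|n IH]; cbn [sumR].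
  - apply continuity_const. intros a b; reflexivity.
  - apply (continuity_plus _ _ IH).
    exact (continuity_comp (fun w => w - x n) (psi q)
      (derivable_continuous _ (derivable_minus _ _ derivable_id (derivable_const (x n))))
      (psi_continuous q)).
Qed.

Lemma OPT_isMin n x y : isMin p n x y -> isMin p n x (OPT p n x).
Proof. intros H. exact (epsilon_spec (inhabits 0) _ (ex_intro _ y H)). Qed.

Lemma OPT_zero n x w : (0 < n)%nat -> dsumpow q n x w = 0 -> OPT p n x = w.
Proof.
  intros Hn H0. pose proof (OPT_isMin n x w (zero_isMin n x w H0)) as Hm.
  set (y := OPT p n x) in *.
  destruct (Rtotal_order y w) as [Hlt|[Heq|Hgt]]; [|exact Heq|]; exfalso.
  - pose proof (isMin_sign n x y ((y + w) / 2) Hm).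
    pose proof (dsumpow_lt n x ((y + w) / 2) w Hn ltac:(lra)). nra.
  - pose proof (isMin_sign n x y ((y + w) / 2) Hm).
    pose proof (dsumpow_lt n x w ((y + w) / 2) Hn ltac:(lra)). nra.
Qed.

Lemma OPT_between n x a b : (0 < n)%nat -> a < b ->
  dsumpow q n x a < 0 -> 0 < dsumpow q n x b -> a <= OPT p n x <= b.
Proof.
  intros Hn Hab Ha Hb.
  destruct (IVT (dsumpow q n x) a b (dsumpow_continuous n x) Hab Ha Hb) as [y [Hy Hy0]].
  rewrite (OPT_zero n x y Hn Hy0). exact Hy.
Qed.

End FirstOrderCondition.

Lemma rootp_nonneg p t : 0 <= rootp p t.
Proof. unfold rootp. destruct (Rle_dec t 0); [lra|]. unfold Rpower. left; apply exp_pos. Qed.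

Lemma rootp_pos p t : 0 < t -> rootp p t = Rpower t (/ INR p).
Proof. intros H. unfold rootp. destruct (Rle_dec t 0); [lra|reflexivity]. Qed.

Lemma rootp_gt0 p t : 0 < t -> 0 < rootp p t.
Proof. intros H. rewrite rootp_pos by exact H. unfold Rpower. apply exp_pos. Qed.

Lemma rootp_mono p s t : (0 < p)%nat -> s <= t -> rootp p s <= rootp p t.
Proof.
  intros Hp H. unfold rootp. destruct (Rle_dec s 0), (Rle_dec t 0).
  - lra.
  - unfold Rpower; left; apply exp_pos.
  - lra.
  - apply Rle_Rpower_l; [left; apply Rinv_0_lt_compat, lt_0_INR; auto | lra].
Qed.

Lemma rootp_mult p s t : 0 < s -> 0 < t -> rootp p (s * t) = rootp p s * rootp p t.
Proof.
  intros Hs Ht. rewrite !rootp_pos by (try apply Rmult_lt_0_compat; assumption).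
  symmetry. apply Rpower_mult_distr; assumption.
Qed.

Lemma rootp_pow p c : (0 < p)%nat -> 0 < c -> rootp p (c ^ p) = c.
Proof.
  intros Hp Hc. rewrite rootp_pos by (apply pow_lt; exact Hc).
  rewrite <- Rpower_pow, Rpower_mult, Rinv_r by (try apply not_0_INR; lia || exact Hc).
  apply Rpower_1; exact Hc.
Qed.

Lemma rootp_two_pow q : rootp (S (S q)) (2 ^ S q) = Rpower 2 (1 - / INR (S (S q))).
Proof.
  rewrite rootp_pos by (apply pow_lt; lra).
  rewrite <- Rpower_pow, Rpower_mult by lra. f_equal.
  rewrite (S_INR (S q)). field. pose proof (pos_INR (S q)). lra.
Qed.

Lemma sc_opt_isMin p n x y : (0 < p)%nat -> isMin p n x y -> sc_opt p n x = sc_det p n x y.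
Proof.
  intros Hp Hm. unfold sc_opt.
  set (P := fun c => (exists y, c = sc_det p n x y) /\ forall y, c <= sc_det p n x y).
  change (epsilon (inhabits 0) P = sc_det p n x y).
  assert (HP : exists c, P c).
  { exists (sc_det p n x y). split; [eauto|]. intros z. apply rootp_mono; auto. }
  destruct (epsilon_spec (inhabits 0) P HP) as [[y1 E] Hle].
  assert (sc_det p n x y <= sc_det p n x y1) by (apply rootp_mono; auto).
  specialize (Hle y). lra.
Qed.

Definition tail_profile (n : nat) (d : R) : nat -> R :=
  fun j => if Nat.eq_dec j 0 then 2 else if Nat.eq_dec j (n - 1) then d else 1.

Lemma sumR_tail n d (h : R -> R) : (2 <= n)%nat ->
  sumR n (fun i => h (tail_profile n d i)) = h 2 + INR (n - 2) * h 1 + h d.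
Proof.
  intros Hn. destruct n as [|[|m]]; try lia.
  replace (S (S m) - 2)%nat with m by lia.
  rewrite sumR_shift. cbn [sumR].
  rewrite (sumR_ext m (fun j => h (tail_profile (S (S m)) d (S j))) (fun _ => h 1)).
  2:{ intros j Hj. unfold tail_profile.
      destruct (Nat.eq_dec (S j) 0); [lia|]. destruct (Nat.eq_dec (S j) (S (S m) - 1)); [lia|reflexivity]. }
  rewrite sumR_const. unfold tail_profile.
  destruct (Nat.eq_dec 0 0); [|lia]. destruct (Nat.eq_dec (S m) 0); [lia|].
  destruct (Nat.eq_dec (S m) (S (S m) - 1)); [ring|lia].
Qed.

Lemma tail_desc n d : d <= 1 -> desc n (tail_profile n d).
Proof.
  intros Hd i j Hij Hj. unfold tail_profile.
  destruct (Nat.eq_dec j 0), (Nat.eq_dec j (n - 1)), (Nat.eq_dec i 0), (Nat.eq_dec i (n - 1));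
    try lra; lia.
Qed.

Lemma tail_update n v : (2 <= n)%nat -> update (tail_profile n 0) (n - 1) v = tail_profile n v.
Proof.
  intros Hn. apply functional_extensionality. intros k. unfold update, tail_profile.
  destruct (Nat.eq_dec k (n - 1)) as [->|]; [|reflexivity].
  destruct (Nat.eq_dec (n - 1) 0); [lia|]. destruct (Nat.eq_dec (n - 1) (n - 1)); [reflexivity|lia].
Qed.

Lemma tail_last n d : (2 <= n)%nat -> tail_profile n d (n - 1)%nat = d.
Proof.
  intros Hn. unfold tail_profile. destruct (Nat.eq_dec (n - 1) 0); [lia|].
  destruct (Nat.eq_dec (n - 1) (n - 1)); [reflexivity|lia].
Qed.

Lemma tail_front n d d' j : (j < n - 1)%nat -> tail_profile n d j = tail_profile n d' j.
Proof.
  intros Hj. unfold tail_profile. destruct (Nat.eq_dec j 0); [reflexivity|].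
  destruct (Nat.eq_dec j (n - 1)); [lia|reflexivity].
Qed.

Lemma dsumpow_tail q n d w : (2 <= n)%nat ->
  dsumpow q n (tail_profile n d) w = psi q (w - 2) + INR (n - 2) * psi q (w - 1) + psi q (w - d).
Proof. intros Hn. exact (sumR_tail n d (fun u => psi q (w - u)) Hn). Qed.

Lemma sumpow_tail p n d y : (2 <= n)%nat ->
  sumpow p n (tail_profile n d) y = Rabs (2 - y) ^ p + INR (n - 2) * Rabs (1 - y) ^ p + Rabs (d - y) ^ p.
Proof. intros Hn. exact (sumR_tail n d (fun u => Rabs (u - y) ^ p) Hn). Qed.

Lemma tail_OPT_deviation q n : (1 <= q)%nat -> (2 <= n)%nat ->
  0 <= OPT (S (S q)) n (tail_profile n (- / INR n)) <= 1 - / INR n / 4.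
Proof.
  intros Hq Hn.
  assert (HnR : 2 <= INR n) by (replace 2 with (INR 2) by (simpl; ring); apply le_INR; exact Hn).
  set (e := / INR n).
  assert (He : 0 < e <= / 2) by (split; [apply Rinv_0_lt_compat | apply Rinv_le_contravar]; lra).
  assert (Hne : INR n * e = 1) by (unfold e; field; lra).
  apply OPT_between; [lia|lra| |]; rewrite dsumpow_tail by exact Hn.
  - rewrite (psi_neg q (0 - 2)), (psi_neg q (0 - 1)), (psi_pos q (0 - - e)) by lra.
    replace (- (0 - 2)) with 2 by ring. replace (- (0 - 1)) with 1 by ring.
    replace (0 - - e) with e by ring. rewrite pow1.
    pose proof (pow_strict q e 2 ltac:(lra) ltac:(lra)). pose proof (pos_INR (n - 2)). lra.
  - rewrite (psi_neg q (1 - e / 4 - 2)), (psi_neg q (1 - e / 4 - 1)), (psi_pos q (1 - e / 4 - - e)) by lra.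
    replace (- (1 - e / 4 - 2)) with (1 + e / 4) by ring. replace (- (1 - e / 4 - 1)) with (e / 4) by ring.
    replace (1 - e / 4 - - e) with (1 + e / 4 + e / 2) by field.
    (* the outer agents push up by at least e ... *)
    assert (Hout : e <= (1 + e / 4 + e / 2) ^ S q - (1 + e / 4) ^ S q).
    { pose proof (pow_tangent q (1 + e / 4) (1 + e / 4 + e / 2) ltac:(lra) ltac:(lra)).
      assert (1 <= (1 + e / 4) ^ q) by (apply pow_R1_Rle; lra).
      assert (2 <= INR (S q)) by (replace 2 with (INR 2) by (simpl; ring); apply le_INR; lia).
      assert (2 * 1 * (e / 2) <= INR (S q) * (1 + e / 4) ^ q * (e / 2))
        by (apply Rmult_le_compat_r; [lra | apply Rmult_le_compat; lra]).
      replace (1 + e / 4 + e / 2 - (1 + e / 4)) with (e / 2) in * by ring. lra. }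
    (* ... while the middle agents pull down by at most e / 16. *)
    assert (Hmid : INR (n - 2) * (e / 4) ^ S q <= e / 16).
    { destruct q as [|q']; [lia|].
      assert ((e / 4) ^ q' <= 1) by (rewrite <- (pow1 q'); apply pow_incr; lra).
      assert ((e / 4) ^ S (S q') <= (e / 4) * (e / 4))
        by (cbn [pow]; rewrite <- Rmult_1_r, Rmult_assoc;
            apply Rmult_le_compat_l; [lra|]; apply Rmult_le_compat_l; lra).
      assert (INR (n - 2) <= INR n) by (apply le_INR; lia).
      assert (INR (n - 2) * (e / 4) ^ S (S q') <= INR n * (e / 4 * (e / 4)))
        by (apply Rmult_le_compat; try apply pos_INR; try lra; apply pow_le; lra).
      assert (INR n * (e / 4 * (e / 4)) = e / 16)
        by (replace (INR n * (e / 4 * (e / 4))) with (INR n * e * (e / 16)) by field; rewrite Hne; ring).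
      lra. }
    lra.
Qed.

Lemma tail_balanced q n : (2 <= n)%nat -> dsumpow q n (tail_profile n 0) 1 = 0.
Proof.
  intros Hn. rewrite dsumpow_tail by exact Hn.
  replace (1 - 2) with (- (1 - 0)) by ring. replace (1 - 1) with 0 by ring.
  rewrite psi_opp. unfold psi. ring.
Qed.

Lemma tail_OPT q n : (2 <= n)%nat -> OPT (S (S q)) n (tail_profile n 0) = 1.
Proof. intros Hn. apply OPT_zero; [lia | exact (tail_balanced q n Hn)]. Qed.

(* Cost of the last agent, truly at 0, when it reports d <= 0; the reports of
   the other agents contribute the same amount [front] whatever d is. *)
Lemma tail_agent_cost p popt p1 p2 n d : (2 <= n)%nat -> d <= 0 ->
  0 <= OPT p n (tail_profile n d) ->
  agent_cost p popt p1 p2 n (tail_profile n d) 0 =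
  popt n * OPT p n (tail_profile n d)
  + sumR (n - 1) (fun j => weight p1 p2 n j * Rabs (0 - tail_profile n 0 j))
  + weight p1 p2 n (n - 1) * - d.
Proof.
  intros Hn Hd Hopt. unfold agent_cost.
  rewrite exp_cost_desc by (apply tail_desc; lra). rewrite sumR_last by lia.
  rewrite (sumR_ext (n - 1) _ (fun j => weight p1 p2 n j * Rabs (0 - tail_profile n 0 j)))
    by (intros; rewrite (tail_front n d 0) by lia; reflexivity).
  rewrite tail_last by exact Hn.
  rewrite (Rabs_left1 (0 - OPT p n _)), (Rabs_pos_eq (0 - d)) by lra. ring.
Qed.

(* Strategyproofness forces a fixed fraction of the OPT probability onto the
   location of the last agent: otherwise it would gain by moving to -1/n. *)
Lemma tail_weight q popt p1 p2 n : (1 <= q)%nat -> (2 <= n)%nat -> 0 <= popt n ->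
  strategyproof (S (S q)) popt p1 p2 -> popt n / 4 <= weight p1 p2 n (n - 1).
Proof.
  intros Hq Hn Hpopt HSP.
  assert (HnR : 2 <= INR n) by (replace 2 with (INR 2) by (simpl; ring); apply le_INR; exact Hn).
  set (e := / INR n).
  assert (He : 0 < e) by (apply Rinv_0_lt_compat; lra).
  pose proof (tail_OPT_deviation q n Hq Hn) as Hdev. fold e in Hdev.
  pose proof (HSP n Hn (n - 1)%nat ltac:(lia) (tail_profile n 0) (- e)) as Hsp.
  rewrite tail_update, tail_last in Hsp by exact Hn.
  rewrite !tail_agent_cost in Hsp
    by (first [exact Hn | rewrite tail_OPT by exact Hn; lra | lra]).
  rewrite tail_OPT in Hsp by exact Hn.
  assert (popt n * OPT (S (S q)) n (tail_profile n (- e)) <= popt n * (1 - e / 4))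
    by (apply Rmult_le_compat_l; lra).
  apply (Rmult_le_reg_r e); [exact He | lra].
Qed.

Lemma tail_ratio q popt p1 p2 n : (2 <= n)%nat -> lottery popt p1 p2 n ->
  sc_opt (S (S q)) n (tail_profile n 0) = rootp (S (S q)) 2 /\
  weight p1 p2 n (n - 1) * rootp (S (S q)) (INR n) <= sc_mech (S (S q)) popt p1 p2 n (tail_profile n 0).
Proof.
  intros Hn Hw. split.
  - rewrite (sc_opt_isMin _ n _ 1) by (lia || exact (zero_isMin q n _ 1 (tail_balanced q n Hn))).
    unfold sc_det. rewrite sumpow_tail by exact Hn. f_equal.
    rewrite (Rabs_minus_sym 0 1).
    replace (2 - 1) with 1 by ring. replace (1 - 1) with 0 by ring. replace (1 - 0) with 1 by ring.
    rewrite Rabs_R1, Rabs_R0, pow1, pow_i by lia. ring.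
  - unfold sc_mech. rewrite exp_cost_desc by (apply tail_desc; lra). rewrite sumR_last by lia.
    assert (0 <= popt n * sc_det (S (S q)) n (tail_profile n 0) (OPT (S (S q)) n (tail_profile n 0)))
      by (apply Rmult_le_pos; [apply Hw | apply rootp_nonneg]).
    assert (0 <= sumR (n - 1) (fun j => weight p1 p2 n j *
                  sc_det (S (S q)) n (tail_profile n 0) (tail_profile n 0 j)))
      by (apply sumR_nonneg; intros; apply Rmult_le_pos; [apply (weight_nonneg popt); [exact Hw|lia] | apply rootp_nonneg]).
    assert (rootp (S (S q)) (INR n) <= sc_det (S (S q)) n (tail_profile n 0) (tail_profile n 0 (n - 1)%nat)).
    { unfold sc_det. rewrite tail_last, sumpow_tail by exact Hn. apply rootp_mono; [lia|].
      replace (2 - 0) with 2 by ring. replace (1 - 0) with 1 by ring. replace (0 - 0) with 0 by ring.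
      rewrite Rabs_R1, Rabs_R0, pow1, pow_i, (Rabs_right 2) by (lia || lra).
      rewrite minus_INR by exact Hn. simpl INR.
      assert (2 <= 2 ^ S (S q)) by (rewrite <- (pow_1 2) at 1; apply Rle_pow; [lra | lia]).
      lra. }
    assert (weight p1 p2 n (n - 1) * rootp (S (S q)) (INR n) <=
            weight p1 p2 n (n - 1) * sc_det (S (S q)) n (tail_profile n 0) (tail_profile n 0 (n - 1)%nat))
      by (apply Rmult_le_compat_l; [apply (weight_nonneg popt); [exact Hw|lia] | assumption]).
    lra.
Qed.

Definition split_profile (k : nat) : nat -> R :=
  fun j => if Compare_dec.lt_dec j k then 1 else 0.

Lemma sumR_split k (h : R -> R) :
  sumR (k + k) (fun i => h (split_profile k i)) = INR k * h 1 + INR k * h 0.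
Proof.
  rewrite sumR_add.
  rewrite (sumR_ext k (fun i => h (split_profile k i)) (fun _ => h 1)).
  2:{ intros; unfold split_profile; destruct Compare_dec.lt_dec; [reflexivity|lia]. }
  rewrite (sumR_ext k (fun j => h (split_profile k (k + j))) (fun _ => h 0)).
  2:{ intros; unfold split_profile; destruct Compare_dec.lt_dec; [lia|reflexivity]. }
  rewrite !sumR_const. reflexivity.
Qed.

Lemma split_desc k : desc (k + k) (split_profile k).
Proof.
  intros i j Hij Hj. unfold split_profile.
  destruct (Compare_dec.lt_dec j k), (Compare_dec.lt_dec i k); try lra; lia.
Qed.

Lemma split_balanced q k : dsumpow q (k + k) (split_profile k) (/ 2) = 0.
Proof.
  unfold dsumpow. rewrite (sumR_split k (fun u => psi q (/ 2 - u))).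
  replace (/ 2 - 1) with (- (/ 2 - 0)) by field. rewrite psi_opp. ring.
Qed.

Lemma sumpow_split p k y :
  sumpow p (k + k) (split_profile k) y = INR k * Rabs (1 - y) ^ p + INR k * Rabs (0 - y) ^ p.
Proof. exact (sumR_split k (fun u => Rabs (u - y) ^ p)). Qed.

Lemma split_ratio q popt p1 p2 k : (1 <= k)%nat -> lottery popt p1 p2 (k + k) ->
  0 < sc_opt (S (S q)) (k + k) (split_profile k) /\
  sc_mech (S (S q)) popt p1 p2 (k + k) (split_profile k) =
  (popt (k + k)%nat + (1 - popt (k + k)%nat) * Rpower 2 (1 - / INR (S (S q))))
  * sc_opt (S (S q)) (k + k) (split_profile k).
Proof.
  intros Hk Hw.
  set (s := 2 * INR k * (/ 2) ^ S (S q)).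
  assert (Hs : 0 < s) by (apply Rmult_lt_0_compat; [apply Rmult_lt_0_compat; [lra | apply lt_0_INR; lia] | apply pow_lt; lra]).
  assert (Hhalf : sc_det (S (S q)) (k + k) (split_profile k) (/ 2) = rootp (S (S q)) s).
  { unfold sc_det. rewrite sumpow_split. f_equal. unfold s.
    rewrite (Rabs_minus_sym 0), !Rabs_right by lra. replace (1 - / 2) with (/ 2) by field.
    replace (/ 2 - 0) with (/ 2) by ring. ring. }
  assert (Hopt : sc_opt (S (S q)) (k + k) (split_profile k) = rootp (S (S q)) s).
  { rewrite (sc_opt_isMin _ _ _ (/ 2)) by (lia || exact (zero_isMin q _ _ _ (split_balanced q k))).
    exact Hhalf. }
  (* a reported location costs k^(1/p) = (2^(p-1) s)^(1/p) *)
  assert (Hloc : forall j, (j < k + k)%nat ->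
            sc_det (S (S q)) (k + k) (split_profile k) (split_profile k j)
            = Rpower 2 (1 - / INR (S (S q))) * rootp (S (S q)) s).
  { intros j Hj. rewrite <- rootp_two_pow, <- rootp_mult by (try apply pow_lt; lra).
    unfold sc_det. f_equal. rewrite sumpow_split. unfold s.
    replace (2 ^ S q * (2 * INR k * (/ 2) ^ S (S q))) with (INR k * (2 * / 2) ^ S (S q))
      by (rewrite Rpow_mult_distr; simpl; ring).
    rewrite Rinv_r, pow1 by lra.
    unfold split_profile. destruct Compare_dec.lt_dec; rewrite ?(Rabs_minus_sym 0 1);
      replace (1 - 1) with 0 by ring; replace (1 - 0) with 1 by ring; replace (0 - 0) with 0 by ring;
      rewrite Rabs_R1, Rabs_R0, pow1, pow_i by lia; ring. }
  split; [rewrite Hopt; apply rootp_gt0, Hs|].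
  unfold sc_mech. rewrite exp_cost_desc by apply split_desc.
  rewrite (sumR_ext _ _ (fun j => weight p1 p2 (k + k) j * (Rpower 2 (1 - / INR (S (S q))) * rootp (S (S q)) s)))
    by (intros j Hj; rewrite Hloc by exact Hj; reflexivity).
  rewrite sumR_scal, (weight_total popt) by exact Hw.
  rewrite Hopt, (OPT_zero q (k + k) (split_profile k) (/ 2) ltac:(lia) (split_balanced q k)), Hhalf.
  ring.
Qed.

Lemma ratio_gt_intro a b r : 0 < b -> r * b < a -> ratio_gt a b r.
Proof.
  intros Hb H. left. split; [exact Hb|].
  apply (Rmult_lt_reg_r b); [exact Hb|]. unfold Rdiv. rewrite Rmult_assoc, Rinv_l by lra. lra.
Qed.

Lemma constant_bounds q : 1 < Rpower 2 (1 - / INR (S (S q))) < 2.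
Proof.
  assert (Hp : 2 <= INR (S (S q))) by (replace 2 with (INR 2) by (simpl; ring); apply le_INR; lia).
  assert (0 < / INR (S (S q)) < 1)
    by (split; [apply Rinv_0_lt_compat; lra | rewrite <- Rinv_1; apply Rinv_lt_contravar; lra]).
  pose proof (Rpower_O 2 ltac:(lra)). pose proof (Rpower_1 2 ltac:(lra)).
  pose proof (Rpower_lt 2 0 (1 - / INR (S (S q))) ltac:(lra) ltac:(lra)).
  pose proof (Rpower_lt 2 (1 - / INR (S (S q))) 1 ltac:(lra) ltac:(lra)).
  lra.
Qed.

Lemma rootp_two_le p : (0 < p)%nat -> rootp p 2 <= 2.
Proof.
  intros Hp. rewrite <- (rootp_pow p 2) at 2 by (lia || lra).
  apply rootp_mono; [exact Hp|]. rewrite <- (pow_1 2) at 1. apply Rle_pow; [lra | lia].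
Qed.

Lemma rootp_unbounded p M : (0 < p)%nat -> exists k, (1 <= k)%nat /\ M <= rootp p (INR (k + k)).
Proof.
  intros Hp. set (M' := Rmax M 1).
  destruct (INR_archimed 1 (M' ^ p) ltac:(lra)) as [k Hk].
  exists (S k). split; [lia|].
  assert (M <= M' /\ 1 <= M') as [HM HM'] by (split; [apply Rmax_l | apply Rmax_r]).
  rewrite <- (rootp_pow p M') in HM by (lia || lra).
  eapply Rle_trans; [exact HM|]. apply rootp_mono; [exact Hp|].
  rewrite plus_INR, S_INR. pose proof (pos_INR k). lra.
Qed.

Lemma split_beats q popt p1 p2 k r : (1 <= k)%nat -> lottery popt p1 p2 (k + k) ->
  popt (k + k)%nat * (Rpower 2 (1 - / INR (S (S q))) - 1) < Rpower 2 (1 - / INR (S (S q))) - r ->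
  ratio_gt (sc_mech (S (S q)) popt p1 p2 (k + k) (split_profile k))
           (sc_opt (S (S q)) (k + k) (split_profile k)) r.
Proof.
  intros Hk Hw Hsmall.
  destruct (split_ratio q popt p1 p2 k Hk Hw) as [Hpos Heq].
  apply ratio_gt_intro; [exact Hpos|]. rewrite Heq.
  apply Rmult_lt_compat_r; [exact Hpos|]. lra.
Qed.

Lemma tail_beats q popt p1 p2 n r : (1 <= q)%nat -> (2 <= n)%nat -> lottery popt p1 p2 n ->
  strategyproof (S (S q)) popt p1 p2 -> r < 2 -> 16 <= popt n * rootp (S (S q)) (INR n) ->
  ratio_gt (sc_mech (S (S q)) popt p1 p2 n (tail_profile n 0))
           (sc_opt (S (S q)) n (tail_profile n 0)) r.
Proof.
  intros Hq Hn Hw HSP Hr Hbig.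
  destruct (tail_ratio q popt p1 p2 n Hn Hw) as [Hopt Hmech].
  pose proof (tail_weight q popt p1 p2 n Hq Hn (proj1 Hw) HSP) as Hweight.
  pose proof (rootp_two_le (S (S q)) ltac:(lia)). pose proof (rootp_gt0 (S (S q)) 2 ltac:(lra)).
  assert (popt n / 4 * rootp (S (S q)) (INR n) <= weight p1 p2 n (n - 1) * rootp (S (S q)) (INR n))
    by (apply Rmult_le_compat_r; [apply rootp_nonneg | exact Hweight]).
  apply ratio_gt_intro; rewrite Hopt; [assumption|]. nra.
Qed.

(* Given r < c, either the OPT probability for n agents is below a threshold
   depending only on r and the split profile wins, or the tail profile wins
   because n was chosen so large that n^(1/p) compensates the threshold. *)
Theorem mainTheorem6 (p : nat) (popt : nat -> R) (p1 p2 : nat -> nat -> R) :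
  (2 < p)%nat ->
  (forall n, (2 <= n)%nat ->
     0 <= popt n /\
     (forall j, (j < n)%nat -> 0 <= p1 n j /\ 0 <= p2 n j) /\
     popt n + sumR n (p1 n) + sumR n (p2 n) = 1) ->
  strategyproof p popt p1 p2 ->
  approx_ratio_ge p popt p1 p2 (Rpower 2 (1 - / INR p)).
Proof.
  intros Hp Hw HSP r Hr.
  destruct p as [|[|q]]; [lia | lia |].
  set (c := Rpower 2 (1 - / INR (S (S q)))) in *.
  pose proof (constant_bounds q) as Hc. fold c in Hc.
  set (threshold := (c - r) / (c - 1)).
  assert (Hth : 0 < threshold) by (apply Rdiv_lt_0_compat; lra).
  assert (Hth_eq : threshold * (c - 1) = c - r) by (unfold threshold; field; lra).
  destruct (rootp_unbounded (S (S q)) (16 / threshold) ltac:(lia)) as [k [Hk Hroot]].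
  exists (k + k)%nat.
  destruct (Rlt_dec (popt (k + k)%nat) threshold) as [Hsmall|Hlarge].
  - exists (split_profile k). split; [lia|].
    apply split_beats; [exact Hk | apply Hw; lia|].
    fold c. apply Rmult_lt_compat_r with (r := c - 1) in Hsmall; lra.
  - exists (tail_profile (k + k) 0). split; [lia|].
    apply tail_beats; [lia | lia | apply Hw; lia | exact HSP | lra |].
    replace 16 with (threshold * (16 / threshold)) by (field; lra).
    apply Rmult_le_compat; [lra | left; apply Rdiv_lt_0_compat; lra | lra | exact Hroot].
Qed.
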